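(* Let $G$ be a dense $K_4^3\cup e$-free $3$-graph with $\lambda(G)>\frac{\sqrt3}{18}$. Then $G$ does not contain $K_5^3$ as a subgraph.
   Context: $K_4^3\cup e$ is the $3$-graph on $\{1,\dots,7\}$ with edges $\{123,124,134,234,567\}$. $K_5^3$ is the complete $3$-graph on $5$ vertices. For a $3$-graph $G$ on $[n]$, $\lambda(G)=\max\{\sum_{e\in E(G)}\prod_{i\in e}x_i:\sum_ix_i=1,x_i\ge0\}$. An $r$-graph $G$ is dense if $\lambda(G')<\lambda(G)$ for every proper subgraph $G'$ of $G$. *)

From mathcomp Require Import all_boot all_order all_algebra.
From mathcomp Require Import all_classical all_reals.
Set Implicit Arguments. Unset Strict Implicit. Unset Printing Implicit Defensive.
Import Order.TTheory GRing.Theory Num.Theory.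
Local Open Scope classical_set_scope.
Local Open Scope ring_scope.

Definition hgraph (n : nat) := {set {set 'I_n}}.

Definition is_3graph (n : nat) (G : hgraph n) : Prop :=
  forall e, e \in G -> #|e| = 3%N.

Definition lagpoly (R : realType) (n : nat) (G : hgraph n) (x : 'I_n -> R) : R :=
  \sum_(e in G) \prod_(i in e) x i.

Definition simplex (R : realType) (n : nat) : set ('I_n -> R) :=
  [set x | (forall i, 0 <= x i) /\ \sum_(i < n) x i = 1].

(* Lagrangian lambda(G) = max over the simplex (the sup is attained by compactness) *)
Arguments lagpoly {R n} G x.
Arguments simplex : clear implicits.
Definition lagrangian (R : realType) (n : nat) (G : hgraph n) : R :=
  sup [set lagpoly G x | x in simplex R n].

Local Close Scope classical_set_scope.

Definition contains (m n : nat) (F : hgraph m) (G : hgraph n) : Prop :=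
  exists f : 'I_m -> 'I_n, injective f /\ forall e, e \in F -> f @: e \in G.

Definition hfree (m n : nat) (F : hgraph m) (G : hgraph n) : Prop :=
  ~ contains F G.

(* K_4^3 u e on {0,...,6}: edges 012, 013, 023, 123, 456 (0-indexed copy of
   123,124,134,234,567). *)
Definition v7 (k : nat) : 'I_7 := inord k.
Definition K43e : hgraph 7 :=
  [set [set v7 0; v7 1; v7 2]; [set v7 0; v7 1; v7 3]; [set v7 0; v7 2; v7 3];
       [set v7 1; v7 2; v7 3]; [set v7 4; v7 5; v7 6]].

Definition K53 : hgraph 5 := [set e : {set 'I_5} | #|e| == 3%N].

(* The Lagrangian of G' on V' equals the
   Lagrangian of the edge set E' viewed on [n] (weights off V' can be taken 0). *)
Arguments lagrangian : clear implicits.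
Definition dense (R : realType) (n : nat) (G : hgraph n) : Prop :=
  forall (V : {set 'I_n}) (E : hgraph n),
    E \subset G -> (forall e, e \in E -> e \subset V) ->
    (V != [set: 'I_n]%SET) || (E != G) ->
    lagrangian R n E < lagrangian R n G.

From mathcomp Require Import all_boot all_order all_algebra.
From mathcomp Require Import all_classical all_reals.
From mathcomp Require Import ring lra zify.
Import Order.TTheory GRing.Theory Num.Theory.
Set Implicit Arguments. Unset Strict Implicit.
Local Open Scope ring_scope.

(* If G contains a copy of K_5^3 on a vertex set S, then K_4^3 u e-freeness forces every
   edge to meet S in at least two vertices: otherwise four vertices of S outside the edge
   span a K_4^3 disjoint from it.  Charging each edge to its two smallest vertices in S
   bounds the Lagrangian polynomial by e_3(a) + e_2(a) (1 - s), where a is the weight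
   vector on S and s its total; by the Newton-Maclaurin inequalities this is at most
   max_s (2 s^2 / 5) (1 - 4 s / 5) = 5/54 < sqrt 3 / 18. *)

Section FiveVariables.

Variables (R : realFieldType) (a b c d e : R).

Let s := a + b + c + d + e.
Let e2 := a*b + a*c + a*d + a*e + b*c + b*d + b*e + c*d + c*e + d*e.
Let e3 := a*b*c + a*b*d + a*b*e + a*c*d + a*c*e + a*d*e
        + b*c*d + b*c*e + b*d*e + c*d*e.

Lemma newton5_e2 : 5 * e2 <= 2 * s ^+ 2.
Proof.
rewrite -subr_ge0.
have -> : 2 * s ^+ 2 - 5 * e2 = ((a-b)^+2 + (a-c)^+2 + (a-d)^+2 + (a-e)^+2 + (b-c)^+2
    + (b-d)^+2 + (b-e)^+2 + (c-d)^+2 + (c-e)^+2 + (d-e)^+2) / 2.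
  by rewrite /s /e2; field.
by rewrite divr_ge0 // !addr_ge0 // sqr_ge0.
Qed.

Hypotheses (a0 : 0 <= a) (b0 : 0 <= b) (c0 : 0 <= c) (d0 : 0 <= d) (e0 : 0 <= e).

Lemma maclaurin5_e3 : 5 * e3 <= s * e2.
Proof.
rewrite -subr_ge0.
have -> : s * e2 - 5 * e3 =
    (a * ((b-c)^+2 + (b-d)^+2 + (b-e)^+2 + (c-d)^+2 + (c-e)^+2 + (d-e)^+2)
   + b * ((a-c)^+2 + (a-d)^+2 + (a-e)^+2 + (c-d)^+2 + (c-e)^+2 + (d-e)^+2)
   + c * ((a-b)^+2 + (a-d)^+2 + (a-e)^+2 + (b-d)^+2 + (b-e)^+2 + (d-e)^+2)
   + d * ((a-b)^+2 + (a-c)^+2 + (a-e)^+2 + (b-c)^+2 + (b-e)^+2 + (c-e)^+2)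
   + e * ((a-b)^+2 + (a-c)^+2 + (a-d)^+2 + (b-c)^+2 + (b-d)^+2 + (c-d)^+2)) / 3.
  by rewrite /s /e2 /e3; field.
by rewrite divr_ge0 // !addr_ge0 // mulr_ge0 // !addr_ge0 // sqr_ge0.
Qed.

Lemma sym5_cubic_le : s <= 1 -> e3 + e2 * (1 - s) <= 5 / 54.
Proof.
move=> s1.
have s0 : 0 <= s by rewrite /s !addr_ge0.
have e20 : 0 <= e2 by rewrite /e2 !addr_ge0 // mulr_ge0.
have := maclaurin5_e3; have := newton5_e2.
(* 5/54 - 2 s^2 / 5 * (1 - 4 s / 5) = 8/25 * (s - 5/6)^2 * (s + 5/12) *)
have : 0 <= (s - 5/6) ^+ 2 * (s + 5/12) by rewrite mulr_ge0 ?sqr_ge0 //; lra.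
have : 0 <= e2 * (1 - s) by rewrite mulr_ge0 //; lra.
nra.
Qed.

End FiveVariables.

Lemma card_set3 (T : finType) (x y z : T) :
  x != y -> x != z -> y != z -> #|[set x; y; z]| = 3%N.
Proof. by move=> xy xz yz; rewrite -finset.setUA !cardsU1 cards1 !inE negb_or xy xz yz. Qed.

Lemma contains_K43e_of_vertices (n : nat) (G : hgraph n) (a0 a1 a2 a3 u1 u2 u3 : 'I_n) :
  uniq [:: a0; a1; a2; a3; u1; u2; u3] ->
  [set a0; a1; a2] \in G -> [set a0; a1; a3] \in G -> [set a0; a2; a3] \in G ->
  [set a1; a2; a3] \in G -> [set u1; u2; u3] \in G -> contains K43e G.
Proof.
set L := [:: a0; a1; a2; a3; u1; u2; u3] => uL ? ? ? ? ?.
exists (fun i : 'I_7 => nth a0 L i); split.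
  by move=> i j /eqP; rewrite nth_uniq // => /eqP; apply: val_inj.
have nth_v7 k : (k < 7)%N -> nth a0 L (v7 k) = nth a0 L k by move=> k7; rewrite inordK.
by move=> E; rewrite !inE => /orP[/orP[/orP[/orP[]|]|]|] /eqP ->;
  rewrite !imsetU !imset_set1 !nth_v7.
Qed.

Definition clique3 (n : nat) (G : hgraph n) (A : {set 'I_n}) : Prop :=
  forall T : {set 'I_n}, T \subset A -> #|T| = 3%N -> T \in G.

Lemma K43e_free_clique_disjoint_edge (n : nat) (G : hgraph n) (A e : {set 'I_n}) :
  hfree K43e G -> clique3 G A -> e \in G -> #|e| = 3%N -> [disjoint A & e] ->
  (#|A| < 4)%N.
Proof.
move=> free cliqueA eG e3 Ae; rewrite ltnNge; apply/negP => A4; apply: free.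
have := enum_uniq (pred_of_set A); have := mem_enum (pred_of_set A).
have : (4 <= size (enum A))%N by rewrite -cardE.
case: (enum A) => [|a0 [|a1 [|a2 [|a3 s]]]] // _ memA.
have {}memA x : x \in [:: a0; a1; a2; a3] -> x \in A.
  by rewrite -memA !inE => /or4P[] /eqP ->; rewrite eqxx ?orbT.
rewrite -[[:: a0, a1, a2, a3 & s]]/([:: a0; a1; a2; a3] ++ s) cat_uniq => /andP[uA _].
move: (uA); rewrite /= !inE !negb_or andbT => /and3P[/and3P[a01 a02 a03] /andP[a12 a13] a23].
have := enum_uniq (pred_of_set e); have := mem_enum (pred_of_set e).
have : size (enum e) = 3%N by rewrite -cardE.
case: (enum e) => [|u1 [|u2 [|u3 [|? ?]]]] // _ meme ue.
have e_def : e = [set u1; u2; u3] by apply/setP => x; rewrite -meme !inE orbA.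
have triple x y z : x \in [:: a0; a1; a2; a3] -> y \in [:: a0; a1; a2; a3] ->
    z \in [:: a0; a1; a2; a3] -> x != y -> x != z -> y != z -> [set x; y; z] \in G.
  move=> xa ya za xy xz yz; apply: cliqueA; last exact: card_set3.
  by rewrite !finset.subUset !finset.sub1set !memA.
apply: (contains_K43e_of_vertices (a0 := a0) (a1 := a1) (a2 := a2) (a3 := a3)
  (u1 := u1) (u2 := u2) (u3 := u3)); rewrite -?e_def // ?triple ?inE ?eqxx ?orbT //.
rewrite -[[:: a0, _, _, _, _, _ & _]]/([:: a0; a1; a2; a3] ++ [:: u1; u2; u3]).
rewrite cat_uniq uA ue andbT.
apply/hasPn => u; rewrite meme => ue'; apply/negP => /memA uinA.
by move: Ae => /disjointFr/(_ uinA); rewrite ue'.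
Qed.

(* For a = x \o f with x in the simplex, the last factor is the weight outside f @: [0, q]. *)
Definition pair_tail_sum (R : ringType) (m : nat) (a : 'I_m -> R) : R :=
  \sum_(p < m) \sum_(q < m | (p < q)%N) a p * a q * (1 - \sum_(r < m | (r <= q)%N) a r).

Lemma pair_tail_sum5_le (R : realFieldType) (a : 'I_5 -> R) :
  (forall k, 0 <= a k) -> \sum_(k < 5) a k <= 1 -> pair_tail_sum a <= 5 / 54.
Proof.
move=> a0 a1; rewrite /pair_tail_sum.
under eq_bigr => p _ do rewrite big_mkcond; under eq_bigr => p _ do
  under eq_bigr => q _ do rewrite (big_mkcond (fun r : 'I_5 => (r <= q)%N)).
rewrite !big_ord_recl !big_ord0 /= in a1 *.
rewrite !addr0 !addrA in a1.
apply: le_trans (sym5_cubic_le (a0 _) (a0 _) (a0 _) (a0 _) (a0 _) a1).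
by rewrite le_eqVlt; apply/orP; left; apply/eqP; ring.
Qed.

Lemma ler_sum_subset (R : numDomainType) (T : finType) (A B : {set T}) (F : T -> R) :
  (forall i, 0 <= F i) -> A \subset B -> \sum_(i in A) F i <= \sum_(i in B) F i.
Proof.
move=> F0 AB; rewrite [X in _ <= X](big_setID A) /= (finset.setIidPr AB) lerDl.
exact: sumr_ge0.
Qed.

Lemma ler_sum_cover (R : numDomainType) (aT rT : finType) (h : aT -> rT)
    (D : {set aT}) (B : {set rT}) (F : rT -> R) :
  (forall y, 0 <= F y) -> B \subset h @: D ->
  \sum_(y in B) F y <= \sum_(t in D) F (h t).
Proof.
move=> F0 BD; apply: le_trans (ler_sum_subset F0 BD) _.
rewrite (partition_big_imset h) /=; apply: ler_sum => _ /imsetP[t tD ->].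
by rewrite (bigD1 t) ?tD ?eqxx //= lerDl sumr_ge0.
Qed.

Section OrderedPairCover.

Variables (m n : nat) (f : 'I_m -> 'I_n).
Hypothesis f_inj : injective f.

Let below (q : 'I_m) : {set 'I_n} := f @: [set r : 'I_m | (r <= q)%N].

Let cover_index : {set 'I_m * 'I_m * 'I_n} :=
  [set t : 'I_m * 'I_m * 'I_n | (t.1.1 < t.1.2)%N && (t.2 \notin below t.1.2)].

Let cover_edge (t : 'I_m * 'I_m * 'I_n) : {set 'I_n} :=
  f t.1.1 |: (f t.1.2 |: [set t.2]).

Lemma exists_cover_edge (e : {set 'I_n}) :
  #|e| = 3%N -> (1 < #|f @^-1: e|)%N -> exists2 t, t \in cover_index & e = cover_edge t.
Proof.
set P := f @^-1: e => e3 P2.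
have [k0 k0P] : exists k0, k0 \in P by apply/set0Pn; rewrite -card_gt0; lia.
have [p pP p_min] := arg_minnP (fun k : 'I_m => val k) k0P.
have {}pP : p \in P := pP.
have [k1 k1P] : exists k1, k1 \in P :\ p.
  by apply/set0Pn; rewrite -card_gt0; rewrite (cardsD1 p P) pP in P2; lia.
have [q /setD1P[qp qP] q_min] := arg_minnP (fun k : 'I_m => val k) k1P.
have pq : (p < q)%N.
  rewrite ltn_neqAle p_min // andbT; apply: contra qp => /eqP epq.
  by apply/eqP/val_inj; rewrite /= epq.
rewrite !inE in pP qP.
have fqe : f q \in e :\ f p by rewrite !inE qP (inj_eq f_inj) qp.
have /cards1P[u Eu] : #|e :\ f p :\ f q| == 1%N.
  by move: e3; rewrite (cardsD1 (f p)) pP (cardsD1 (f q) (e :\ f p)) fqe !add1n => -[->].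
exists (p, q, u); last by rewrite /cover_edge /= -Eu !finset.setD1K.
rewrite inE /= pq; apply/imsetP => -[r]; rewrite inE => rq ur.
have /setD1P[uq /setD1P[up ue]] : u \in e :\ f p :\ f q by rewrite Eu set11.
have rp : r != p by apply: contraNneq up => rp; rewrite ur rp.
have rP : r \in P :\ p by rewrite !inE rp -ur ue.
have qr : (q <= r)%N := q_min r rP.
suff /val_inj rq' : val r = val q by rewrite ur rq' eqxx in uq.
by apply/eqP; rewrite eqn_leq rq qr.
Qed.

Lemma sum_outside_below (R : realType) (x : 'I_n -> R) (q : 'I_m) :
  \sum_(i < n) x i = 1 ->
  1 - \sum_(r < m | (r <= q)%N) x (f r) = \sum_(u | u \notin below q) x u.
Proof.
move=> x1; have below_sum : \sum_(i in below q) x i = \sum_(r < m | (r <= q)%N) x (f r).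
  rewrite big_imset /=; last by move=> ? ? _ _; apply: f_inj.
  by apply: eq_bigl => r; rewrite inE.
by rewrite -x1 -below_sum (bigID (mem (below q))) /=; lra.
Qed.

Lemma pair_tail_sum_cover (R : realType) (x : 'I_n -> R) : \sum_(i < n) x i = 1 ->
  pair_tail_sum (x \o f) = \sum_(t in cover_index) \prod_(i in cover_edge t) x i.
Proof.
move=> x1; rewrite /pair_tail_sum.
under eq_bigr => p _ do under eq_bigr => q _ do rewrite /= sum_outside_below // big_distrr.
rewrite pair_big_dep pair_big_dep /=.
apply: eq_big => [[[p q] u]|[[p q] u] /andP[/= pq u_out]]; first by rewrite /cover_index inE.
have fpq : f p != f q by rewrite (inj_eq f_inj); apply: contraTneq pq => ->; rewrite ltnn.
have fpu : f p != u.
  by apply: contraNneq u_out => <-; apply: imset_f; rewrite inE ltnW.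
have fqu : f q != u by apply: contraNneq u_out => <-; apply: imset_f; rewrite inE.
by rewrite /cover_edge /= big_setU1 ?big_setU1 ?big_set1 //=;
  rewrite ?mulrA // !inE ?negb_or ?fpq ?fpu ?fqu.
Qed.

Lemma sum_comp_le1 (R : realType) (x : 'I_n -> R) :
  simplex R n x -> \sum_(k < m) (x \o f) k <= 1.
Proof.
move=> [x0 <-] /=; rewrite -(big_imset _ (in2W f_inj)) /=.
by rewrite [X in _ <= X](bigID (mem [set f k | k in xpredT])) /= lerDl sumr_ge0.
Qed.

Lemma lagpoly_le_pair_tail_sum (R : realType) (G : hgraph n) (x : 'I_n -> R) :
  is_3graph G -> (forall e, e \in G -> (1 < #|f @^-1: e|)%N) -> simplex R n x ->
  lagpoly G x <= pair_tail_sum (x \o f).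
Proof.
move=> G3 meet [x0 x1]; rewrite pair_tail_sum_cover //.
apply: ler_sum_cover => [e|]; first by apply: prodr_ge0 => i _; apply: x0.
apply/fintype.subsetP => e eG.
by have [t tD ->] := exists_cover_edge (G3 e eG) (meet e eG); apply: imset_f.
Qed.

End OrderedPairCover.

Lemma K53_copy_clique (n : nat) (G : hgraph n) (f : 'I_5 -> 'I_n) (Q : {set 'I_5}) :
  injective f -> (forall E, E \in K53 -> f @: E \in G) -> clique3 G (f @: Q).
Proof.
move=> f_inj copy T TQ T3.
have T_image : f @: (f @^-1: T) = T.
  apply/setP => y; apply/idP/idP => [/imsetP[k kT ->]|yT]; first by rewrite inE in kT.
  have /imsetP[k _ yk] : y \in f @: Q by apply: (fintype.subsetP TQ).
  by rewrite yk imset_f // inE -yk.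
by rewrite -T_image; apply: copy; rewrite inE -(card_imset _ f_inj) T_image T3.
Qed.

Lemma K53_copy_meets_edges (n : nat) (G : hgraph n) (f : 'I_5 -> 'I_n) (e : {set 'I_n}) :
  hfree K43e G -> injective f -> (forall E, E \in K53 -> f @: E \in G) ->
  e \in G -> #|e| = 3%N -> (1 < #|f @^-1: e|)%N.
Proof.
move=> free f_inj copy eG e3.
have disj : [disjoint f @: ~: (f @^-1: e) & e].
  by apply/pred0P => y /=; apply/andP => -[/imsetP[k]]; rewrite !inE => /negPf kNe -> /[!kNe].
have := K43e_free_clique_disjoint_edge free (K53_copy_clique f_inj copy) eG e3 disj.
rewrite (card_imset _ f_inj); have := cardsC (f @^-1: e); rewrite card_ord.
by set c := #|~: _|; set d := #|f @^-1: e|; lia.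
Qed.

Lemma lagrangian_le (R : realType) (n : nat) (G : hgraph n) (c : R) :
  0 <= c -> (forall x, simplex R n x -> lagpoly G x <= c) -> lagrangian R n G <= c.
Proof.
move=> c0 le_c; rewrite /lagrangian.
have [[y [x xS _]]|no_value] := pselect (exists y, [set lagpoly G x | x in simplex R n]%classic y).
  by apply: ge_sup => [|_ [z zS <-]]; [exists (lagpoly G x), x | apply: le_c].
suff -> : [set lagpoly G x | x in simplex R n]%classic = set0 by rewrite sup0.
by apply/seteqP; split => // y Hy; apply: no_value; exists y.
Qed.

Theorem claim5p2 (R : realType) (n : nat) (G : hgraph n) :
  is_3graph G -> dense R G -> hfree K43e G ->
  Num.sqrt 3 / 18 < lagrangian R n G ->
  ~ contains K53 G.
Proof.
move=> G3 _ free large [f [f_inj copy]].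
have meet e : e \in G -> (1 < #|f @^-1: e|)%N.
  by move=> eG; apply: (K53_copy_meets_edges free f_inj copy eG (G3 e eG)).
have : lagrangian R n G <= 5 / 54.
  apply: lagrangian_le => [|x xS]; first by rewrite divr_ge0.
  apply: le_trans (lagpoly_le_pair_tail_sum f_inj G3 meet xS) _.
  apply: pair_tail_sum5_le; last by have := sum_comp_le1 f_inj xS.
  by case: xS => x0 _ k; apply: x0.
have sqrt3_ge0 : 0 <= Num.sqrt (3 : R) by apply: sqrtr_ge0.
have sqrt3_sq : Num.sqrt (3 : R) ^+ 2 = 3 by rewrite sqr_sqrtr.
have : 5 / 54 < Num.sqrt (3 : R) / 18 by nra.
lra.
Qed.
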